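(* Let $b\geq2$ and even, $k\leq n-2$ and $\mathbf s=s_1s_2\ldots s_k$. If $\mathbf t$ is the last sequence in $\mathbf s\,|\,R_n(b)$ when this set is listed in co-Reflected Gray Code Order, then $\mathbf t$ has one of the following forms: 1. $\mathbf t=\mathbf sM0\ldots0$ if $U_{k+1}$ is even and $M$ is even, 2. $\mathbf t=\mathbf sM(M+1)0\ldots0$ if $U_{k+1}$ is even and $M$ is odd, 3. $\mathbf t=\mathbf s0\ldots0$ if $U_{k+1}$ is odd, where $M=\min\{b,\max\{s_i\}_{i=1}^k+1\}$ and $U_{k+1}=\sum_{i=1}^k[s_i\neq0 \text{ and } s_i \text{ is even}]$.
   Context: A restricted growth function of length $n$ is an integer sequence $s_1s_2\ldots s_n$ with $s_1=0$ and $0\leq s_{i+1}\leq \max\{s_j\}_{j=1}^i+1$ for $1\leq i\leq n-1$; $R_n$ is the set of these, and for $b\geq1$, $R_n(b)=\{s_1\ldots s_n\in R_n : \max\{s_i\}_{i=1}^n\leq b\}$. For a sequence $\mathbf u$, $\mathbf u\,|\,S$ denotes the subset of $S$ of sequences having prefix $\mathbf u$. The co-Reflected Gray Code Order on $\{0,1,\ldots,m-1\}^n$ ($m\geq2$) is defined by: $s_1\ldots s_n$ is less than $t_1\ldots t_n$ if, for the position $k$ with $s_i=t_i$ ($1\leq i\leq k-1$) and $s_k\neq t_k$, either $U_k$ is even and $s_k<t_k$, or $U_k$ is odd and $s_k>t_k$, where $U_k=|\{i\in\{1,\ldots,k-1\}: s_i\neq0,\ s_i \text{ even}\}|$. $[P]$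 denotes the Iverson bracket (1 if $P$ is true, 0 otherwise). *)

From mathcomp Require Import all_boot.
Set Implicit Arguments. Unset Strict Implicit. Unset Printing Implicit Defensive.

(* Positions are 0-based in Rocq: s_i (1-based) is nth 0 s (i-1). *)

Definition seqmax (s : seq nat) : nat := foldr maxn 0 s.

Fixpoint rgf_tail (m : nat) (s : seq nat) : bool :=
  match s with
  | [::] => true
  | x :: s' => (x <= m.+1) && rgf_tail (maxn m x) s'
  end.

(* restricted growth function: s_1 = 0 and s_{i+1} <= max(s_1..s_i) + 1 *)
Definition is_rgf (s : seq nat) : bool :=
  match s with
  | [::] => false
  | x :: s' => (x == 0) && rgf_tail x s'
  end.

Definition in_Rnb (n b : nat) (s : seq nat) : Prop :=
  size s = n /\ is_rgf s /\ seqmax s <= b.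

Definition Ucount (p : seq nat) : nat :=
  count (fun x => (x != 0) && ~~ odd x) p.

Definition coRGC_lt (s t : seq nat) : Prop :=
  size s = size t /\
  exists k, [/\ k < size s, take k s = take k t, nth 0 s k != nth 0 t k &
    if ~~ odd (Ucount (take k s)) then nth 0 s k < nth 0 t k
    else nth 0 t k < nth 0 s k].

Definition last_in_prefix_class (n b : nat) (s t : seq nat) : Prop :=
  [/\ in_Rnb n b t, take (size s) t = s &
    forall t', in_Rnb n b t' -> take (size s) t' = s -> t' <> t -> coRGC_lt t' t].

(* Two completions r, r' of s in R_n(b) are compared at the first position
   where they differ, in the direction given by the parity of U on the common
   prefix.  If U(s) is odd, the all-zero completion wins, since zeros never
   change U.  If U(s) is even, every first entry is at most M, so M wins
   there; a nonzero even entry flips the parity of U, after which zeros win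
   again.  An odd M does not flip it, and the second entry must be M + 1:
   then M = max(s) + 1 < b, so M + 1 is admissible because b is even. *)

From mathcomp Require Import all_boot.
From mathcomp Require Import zify.

Set Implicit Arguments.
Unset Strict Implicit.
Unset Printing Implicit Defensive.

Arguments seqmax : simpl never.

Lemma seqmax_cons x t : seqmax (x :: t) = maxn x (seqmax t).
Proof. by []. Qed.

Lemma seqmax_cat a c : seqmax (a ++ c) = maxn (seqmax a) (seqmax c).
Proof.
elim: a => [|x a IH] /=; first by rewrite max0n.
by rewrite !seqmax_cons IH maxnA.
Qed.

Lemma seqmax_nseq0 m : seqmax (nseq m 0) = 0.
Proof. by elim: m => [|m IH] //; rewrite /= seqmax_cons IH. Qed.

Lemma rgf_tail_cat m a c :
  rgf_tail m (a ++ c) = rgf_tail m a && rgf_tail (maxn m (seqmax a)) c.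
Proof.
elim: a m => [|x a IH] m /=; first by rewrite maxn0.
by rewrite IH seqmax_cons maxnA andbA.
Qed.

Lemma rgf_tail_nseq0 m k : rgf_tail m (nseq k 0).
Proof. by elim: k m => [|k IH] m //=; rewrite IH. Qed.

Lemma is_rgf_cat s r :
  s != [::] -> is_rgf (s ++ r) = is_rgf s && rgf_tail (seqmax s) r.
Proof. by case: s => [|x s] //= _; rewrite rgf_tail_cat andbA seqmax_cons. Qed.

Lemma in_Rnb_cat n b s r : s != [::] ->
  in_Rnb n b (s ++ r) <->
  [/\ size s + size r = n, is_rgf s && rgf_tail (seqmax s) r
    & maxn (seqmax s) (seqmax r) <= b].
Proof. by move=> s0; rewrite /in_Rnb size_cat is_rgf_cat // seqmax_cat; firstorder. Qed.

Lemma Ucount_rcons s x : Ucount (rcons s x) = Ucount s + ((x != 0) && ~~ odd x).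
Proof. by rewrite /Ucount -cats1 count_cat /= addn0. Qed.

Lemma coRGC_lt_asym x y : coRGC_lt x y -> ~ coRGC_lt y x.
Proof.
move=> [_ [i [_ Ti Ni Ci]]] [_ [j [_ Tj Nj Cj]]].
have nth_eq_take a c k l : k < l -> take l a = take l c -> nth 0 a k = nth 0 c k.
  by move=> kl E; rewrite -(nth_take _ kl) E nth_take.
case: (ltngtP i j) => [ij|ji|ij].
- by move: Ni; rewrite (nth_eq_take _ _ _ _ ij (esym Tj)) eqxx.
- by move: Nj; rewrite (nth_eq_take _ _ _ _ ji (esym Ti)) eqxx.
- by subst j; move: Cj; rewrite -Ti; case: ifP Ci; lia.
Qed.

Lemma coRGC_lt_head s x y r r' : size r = size r' ->
  (if ~~ odd (Ucount s) then x < y else y < x) ->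
  coRGC_lt (s ++ x :: r) (s ++ y :: r').
Proof.
move=> rr' xy; split; first by rewrite !size_cat /= rr'.
exists (size s); rewrite !take_size_cat // !nth_cat ltnn subnn /=.
by split => //; [rewrite size_cat addnS ltnS leq_addr | case: ifP xy; lia].
Qed.

Lemma coRGC_lt_cons s x r r' :
  coRGC_lt (rcons s x ++ r) (rcons s x ++ r') -> coRGC_lt (s ++ x :: r) (s ++ x :: r').
Proof. by rewrite !cat_rcons. Qed.

Lemma coRGC_lt_zeros s r m : odd (Ucount s) -> size r = m -> r <> nseq m 0 ->
  coRGC_lt (s ++ r) (s ++ nseq m 0).
Proof.
elim: r s m => [|x r IH] s [|m] //= Us [size_r] ne.
case: (posnP x) => [x0|x_gt0].
  rewrite x0; apply/coRGC_lt_cons/IH => // [|r0].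
    by rewrite Ucount_rcons addn0.
  by apply: ne; rewrite x0 r0.
by apply: coRGC_lt_head; rewrite ?size_nseq // Us.
Qed.

Definition last_completion (n b : nat) (s r : seq nat) : Prop :=
  in_Rnb n b (s ++ r) /\
  forall r', in_Rnb n b (s ++ r') -> r' <> r -> coRGC_lt (s ++ r') (s ++ r).

Lemma last_in_prefix_class_completion n b s t r :
  last_in_prefix_class n b s t -> last_completion n b s r -> t = s ++ r.
Proof.
move=> [t_in t_s t_last] [r_in r_last].
have def_t : t = s ++ drop (size s) t by rewrite -{1}(cat_take_drop (size s) t) t_s.
case: (eqVneq t (s ++ r)) => [//|/eqP t_ne]; exfalso.
have lt_rt := t_last _ r_in (take_size_cat _ (erefl _)) (nesym t_ne).
have ne_r : drop (size s) t <> r by move=> E; apply: t_ne; rewrite def_t E.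
rewrite def_t in t_in lt_rt.
exact: coRGC_lt_asym lt_rt (r_last _ t_in ne_r).
Qed.

Definition max_next_entry (b : nat) (s : seq nat) : nat := minn b (seqmax s).+1.

Section LastCompletion.

Variables (n b : nat) (s : seq nat).
Hypotheses (s_neq0 : s != [::]) (rgf_s : is_rgf s) (max_s : seqmax s <= b).

Local Notation M := (max_next_entry b s).

Lemma completion_size r : in_Rnb n b (s ++ r) -> size r = n - size s.
Proof. by case/in_Rnb_cat => // <-; rewrite addKn. Qed.

Lemma completion_head x r : in_Rnb n b (s ++ x :: r) -> x <= M.
Proof.
case/in_Rnb_cat=> // _ /andP[_ /= /andP[x_le _]].
by rewrite seqmax_cons leq_min x_le andbT; lia.
Qed.

Lemma completion_second x y r :
  in_Rnb n b (s ++ x :: y :: r) -> y <= (maxn (seqmax s) x).+1.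
Proof. by case/in_Rnb_cat=> // _ /andP[_ /= /and3P[]]. Qed.

Lemma in_Rnb_completion r : size s + size r = n ->
  rgf_tail (seqmax s) r -> seqmax r <= b -> in_Rnb n b (s ++ r).
Proof. by move=> size_r rgf_r max_r; apply/in_Rnb_cat; rewrite // rgf_s geq_max max_s. Qed.

Lemma last_completion_Uodd : size s <= n -> odd (Ucount s) ->
  last_completion n b s (nseq (n - size s) 0).
Proof.
move=> size_s Us; split.
  by apply: in_Rnb_completion; rewrite ?size_nseq ?rgf_tail_nseq0 ?seqmax_nseq0; lia.
move=> r' r'_in ne; exact: coRGC_lt_zeros Us (completion_size r'_in) ne.
Qed.

Lemma last_completion_Meven : 0 < b -> size s < n -> ~~ odd (Ucount s) -> ~~ odd M ->
  last_completion n b s (M :: nseq (n - size s - 1) 0).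
Proof.
move=> b_gt0 size_s Us M_even.
have [M_gt0 M_le_b M_le] : [/\ 0 < M, M <= b & M <= (seqmax s).+1].
  by rewrite /max_next_entry geq_minl geq_minr leq_min b_gt0.
split.
  by apply: in_Rnb_completion;
    rewrite /= ?size_nseq ?rgf_tail_nseq0 ?seqmax_cons ?seqmax_nseq0 ?maxn0 ?M_le //; lia.
case=> [/completion_size /= ?|x r' r'_in ne]; first lia.
have /= size_r' := completion_size r'_in.
have [x_M|x_ne] := eqVneq x M; last first.
  have x_lt_M : x < M by rewrite ltn_neqAle x_ne (completion_head r'_in).
  by apply: coRGC_lt_head; rewrite ?Us ?size_nseq //; lia.
rewrite x_M; apply/coRGC_lt_cons/coRGC_lt_zeros.
- by rewrite Ucount_rcons -lt0n M_gt0 M_even addn1 /= Us.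
- lia.
- by move=> r'_0; apply: ne; rewrite x_M r'_0.
Qed.

Lemma last_completion_Modd : ~~ odd b -> size s < n.-1 -> ~~ odd (Ucount s) -> odd M ->
  last_completion n b s (M :: M.+1 :: nseq (n - size s - 2) 0).
Proof.
move=> b_even size_s Us M_odd.
have [M_max M_lt_b] : M = (seqmax s).+1 /\ M < b.
  have M_ne_b : M != b by apply: contraNneq b_even => <-.
  move: M_ne_b; rewrite /max_next_entry /minn; case: ltnP; lia.
split.
  by apply: in_Rnb_completion;
    rewrite /= ?size_nseq ?rgf_tail_nseq0 ?seqmax_cons ?seqmax_nseq0; lia.
case=> [/completion_size /= ?|x [/completion_size /= ?|y r' r'_in ne]]; try lia.
have /= size_r' := completion_size r'_in.
have [x_M|x_ne] := eqVneq x M; last first.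
  have x_lt_M : x < M by rewrite ltn_neqAle x_ne (completion_head r'_in).
  by apply: coRGC_lt_head; rewrite ?Us //= size_nseq; lia.
have U_sM : Ucount (rcons s M) = Ucount s.
  by rewrite Ucount_rcons M_odd andbF addn0.
rewrite x_M; apply: coRGC_lt_cons.
have [y_M|y_ne] := eqVneq y M.+1; last first.
  have y_lt : y < M.+1 by move: (completion_second r'_in); rewrite x_M; lia.
  by apply: coRGC_lt_head; rewrite ?U_sM ?Us ?size_nseq //; lia.
rewrite y_M; apply/coRGC_lt_cons/coRGC_lt_zeros.
- by rewrite Ucount_rcons U_sM /= M_odd addn1 /= Us.
- lia.
- by move=> r'_0; apply: ne; rewrite x_M y_M r'_0.
Qed.

End LastCompletion.

Theorem proposition3 (b n : nat) (s t : seq nat) :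
  2 <= b -> ~~ odd b ->
  1 <= size s -> size s <= n - 2 ->
  last_in_prefix_class n b s t ->
  let k := size s in
  let M := minn b (seqmax s).+1 in
  if ~~ odd (Ucount s) then
    (if ~~ odd M then t = s ++ M :: nseq (n - k - 1) 0
     else t = s ++ M :: M.+1 :: nseq (n - k - 2) 0)
  else t = s ++ nseq (n - k) 0.
Proof.
move=> b_ge2 b_even size_s_gt0 size_s t_last k M.
have s_neq0 : s != [::] by rewrite -size_eq0 -lt0n.
have [t_in t_s _] := t_last.
rewrite -(cat_take_drop (size s) t) t_s in t_in.
have /(in_Rnb_cat _ _ _ s_neq0) [_ /andP[rgf_s _] max_st] := t_in.
have max_s : seqmax s <= b by move: max_st; rewrite geq_max => /andP[].
have t_eq := last_in_prefix_class_completion t_last.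
case: ifP => Us; last by apply/t_eq/last_completion_Uodd => //; [lia | exact: negbFE Us].
case: ifP => M_parity.
- by apply/t_eq/last_completion_Meven => //; lia.
- by apply/t_eq/last_completion_Modd => //; [lia | exact: negbFE M_parity].
Qed.
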